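(* Let $r\in\mathbb{Z}$, $s\in\mathbb{N}$ be coprime with $|r|<s$, let $\theta=\arccos(r/s)$, and let $k\in\mathbb{N}$ be squarefree. Let $E$ be the elliptic curve $y^2=x\bigl(x-(s-r)k\bigr)\bigl(x+(s+r)k\bigr)$ over $\mathbb{Q}$ associated with $(r,s,k)$. (i) If $k$ is odd and $E(\mathbb{Q})$ has a point of order $4$ or $8$, then $k=1$. (ii) If $k$ is even and $E(\mathbb{Q})$ has a point of order $4$ or $8$, then $k=2$. (iii) If $k$ is odd and $E(\mathbb{Q})$ has a point of order $3$ or $6$, then $k\in\{1,3\}$. (iv) If $k$ is even and $E(\mathbb{Q})$ has a point of order $3$ or $6$, then $k\in\{2,6\}$.
   Context: Given $\theta\in(0,\pi)$ with $\cos\theta=r/s$ in lowest terms, $k\in\mathbb{N}$ is $\theta$-congruent if there is a triangle with rational sides having angle $\theta$ and area $k\sqrt{s^2-r^2}$; this holds iff $E(\mathbb{Q})$ has a point of order $>2$, and $k$ is said to be $\theta$-congruent due to $N$-torsion when $E(\mathbb{Q})$ has a point of order $N$ (which then yields such a triangle). *)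

From HB Require Import structures.
From mathcomp Require Import all_boot all_order all_algebra.
Set Implicit Arguments. Unset Strict Implicit. Unset Printing Implicit Defensive.
Import Order.TTheory GRing.Theory Num.Theory.
Local Open Scope ring_scope.

Definition squarefree (k : nat) : Prop :=
  (0 < k)%N /\ forall p : nat, prime p -> ~~ (p * p %| k)%N.

(* Points of the projective curve: None = point at infinity O. *)
Definition ecpt := option (rat * rat).

Record wcurve := WCurve { wa : rat; wb : rat; wc : rat }.

Definition on_curve (E : wcurve) (P : ecpt) : bool :=
  match P with
  | None => true
  | Some (x, y) => y ^+ 2 == x ^+ 3 + wa E * x ^+ 2 + wb E * x + wc E
  end.

Definition ec_add (E : wcurve) (P Q : ecpt) : ecpt :=
  match P, Q with
  | None, _ => Q
  | _, None => P
  | Some (x1, y1), Some (x2, y2) =>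
      if (x1 == x2) && (y1 == - y2) then None
      else
        let l := if x1 == x2
                 then (3%:R * x1 ^+ 2 + 2%:R * wa E * x1 + wb E) / (2%:R * y1)
                 else (y2 - y1) / (x2 - x1) in
        let x3 := l ^+ 2 - wa E - x1 - x2 in
        Some (x3, l * (x1 - x3) - y1)
  end.

Fixpoint ec_mul (E : wcurve) (n : nat) (P : ecpt) : ecpt :=
  match n with
  | O => None
  | S m => ec_add E P (ec_mul E m P)
  end.

Definition has_order (E : wcurve) (N : nat) (P : ecpt) : Prop :=
  on_curve E P /\ (0 < N)%N /\ ec_mul E N P = None /\
  forall m : nat, (0 < m)%N -> (m < N)%N -> ec_mul E m P <> None.

Definition has_point_of_order (E : wcurve) (N : nat) : Prop :=
  exists P : ecpt, has_order E N P.

(* The curve y^2 = x (x - (s-r)k) (x + (s+r)k) expanded: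
   x^3 + 2rk x^2 - (s-r)(s+r)k^2 x. *)
Definition theta_curve (r : int) (s k : nat) : wcurve :=
  let R := (r%:~R : rat) in let S := (s%:R : rat) in let K := (k%:R : rat) in
  WCurve ((S + R) * K - (S - R) * K) (- ((S - R) * K) * ((S + R) * K)) 0.

From HB Require Import structures.
From mathcomp Require Import all_boot all_order all_algebra.
From mathcomp Require Import ring lra zify.
Import Order.TTheory GRing.Theory Num.Theory.
Set Implicit Arguments. Unset Strict Implicit. Unset Printing Implicit Defensive.

(* The group law is only given by explicit formulas, so 2-descent is done by hand:
   the chord through P, [i]P and [i+1]P shows that x([i]P) - e is, modulo squares,
   (x(P) - e)^i for every root e of the cubic.

   If P has order 4 or 8, the point [n/2]P = (x, 0) of order 2 thus has x - e a square
   for all three roots 0, (s-r)k, -(s+r)k; positivity forces x = (s-r)k, so (s-r)k and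
   2sk are squares. If P has order 3 or 6, the x-coordinate X of P, resp. [2]P, is a
   root of the 3-division polynomial and X, X - (s-r)k, X + (s+r)k are squares; by the
   rational root theorem X / k has denominator dividing 3.

   Comparing p-adic valuations, a prime p dividing the squarefree k but not 2, resp. 6,
   then divides both s - r and s + r, against gcd(r, s) = 1. So k divides 2, resp. 6. *)

Local Open Scope ring_scope.

(** * Chord-tangent arithmetic *)

Definition ec_neg (P : ecpt) : ecpt := if P is Some (x, y) then Some (x, - y) else None.

Definition ec_x (P : ecpt) : rat := if P is Some (x, _) then x else 0.

Lemma ec_negK : involutive ec_neg.
Proof. by case=> [[x y]|] //=; rewrite opprK. Qed.

Lemma ec_x_neg P : ec_x (ec_neg P) = ec_x P.
Proof. by case: P => [[]|]. Qed.

Lemma eq_oppr_self (y : rat) : (y == - y) = (y == 0).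
Proof. by rewrite -addr_eq0 -mulr2n mulrn_eq0. Qed.

Lemma ec_neg_self (P : ecpt) : P <> None -> P = ec_neg P -> exists x, P = Some (x, 0).
Proof. by case: P => [[x y]|] // _ [/eqP]; rewrite eq_oppr_self => /eqP->; exists x. Qed.

Section WeierstrassCurve.

Variable E : wcurve.

Definition wcubic (x : rat) := x ^+ 3 + wa E * x ^+ 2 + wb E * x + wc E.

Definition wcubic' (x : rat) := 3%:R * x ^+ 2 + 2%:R * wa E * x + wb E.

Definition nonsingular := forall x, wcubic x = 0 -> wcubic' x != 0.

(* The 2-descent condition: it holds for the x-coordinate of every point of 2 E(Q). *)
Definition sq_at_roots (x : rat) := forall e, wcubic e = 0 -> exists t, x - e = t ^+ 2.

(* The 3-division polynomial, whose roots are the x-coordinates of the points of order 3. *)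
Definition psi3 (x : rat) :=
  3%:R * x ^+ 4 + 4%:R * wa E * x ^+ 3 + 6%:R * wb E * x ^+ 2 + 12%:R * wc E * x
  + 4%:R * wa E * wc E - wb E ^+ 2.

Lemma on_curveE x y : on_curve E (Some (x, y)) = (y ^+ 2 == wcubic x).
Proof. by []. Qed.

Lemma ec_add_line x1 y1 x2 y2 x3 y3 :
  on_curve E (Some (x1, y1)) -> on_curve E (Some (x2, y2)) ->
  ec_add E (Some (x1, y1)) (Some (x2, y2)) = Some (x3, y3) ->
  exists l, [/\ y3 = l * (x1 - x3) - y1, y2 = y1 + l * (x2 - x1),
     x3 = l ^+ 2 - wa E - x1 - x2 &
     forall z, wcubic z - (l * (z - x1) + y1) ^+ 2 = (z - x1) * (z - x2) * (z - x3)].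
Proof.
rewrite !on_curveE => /eqP h1 /eqP h2 /=.
case: (eqVneq x1 x2) => [ex|nx] /=.
  subst x2.
  case: (eqVneq y1 (- y2)) => [//|ny] /= [<- <-].
  have ey : y1 = y2.
    have /eqP : (y1 - y2) * (y1 + y2) = 0 by rewrite -subr_sqr h1 h2 subrr.
    by rewrite mulf_eq0 subr_eq0 addr_eq0 (negbTE ny) orbF => /eqP.
  subst y2.
  have y0 : y1 != 0 by rewrite eq_oppr_self in ny.
  set l := (_ / _).
  have hl : 2%:R * l * y1 = wcubic' x1 by rewrite /l /wcubic'; field.
  exists l; split => //; first by rewrite subrr mulr0 addr0.
  move=> z; apply/eqP; rewrite -subr_eq0; apply/eqP.
  have -> : wcubic z - (l * (z - x1) + y1) ^+ 2 -
     (z - x1) * (z - x1) * (z - (l ^+ 2 - wa E - x1 - x1)) =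
     (wcubic x1 - y1 ^+ 2) + (z - x1) * (wcubic' x1 - 2%:R * l * y1)
    by rewrite /wcubic /wcubic'; ring.
  by rewrite h1 hl !subrr mulr0 addr0.
set l := (_ / _).
have hl : y2 = y1 + l * (x2 - x1) by rewrite /l; field; rewrite subr_eq0 eq_sym.
move=> [<- <-]; exists l; split => // z; apply/eqP; rewrite -subr_eq0; apply/eqP.
have hx : x1 - x2 != 0 by rewrite subr_eq0.
apply: (mulfI hx); rewrite mulr0.
have -> : (x1 - x2) * (wcubic z - (l * (z - x1) + y1) ^+ 2 -
     (z - x1) * (z - x2) * (z - (l ^+ 2 - wa E - x1 - x2))) =
     (z - x2) * (wcubic x1 - y1 ^+ 2) - (z - x1) * (wcubic x2 - (l * (x2 - x1) + y1) ^+ 2)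
  by rewrite /wcubic; ring.
by rewrite h1 (addrC (l * _)) -hl h2 !subrr !mulr0 subrr.
Qed.

Lemma ec_add_on_curve P Q : on_curve E P -> on_curve E Q -> on_curve E (ec_add E P Q).
Proof.
case: P => [[x1 y1]|] //; case: Q => [[x2 y2]|] // h1 h2.
case h: ec_add => [[x3 y3]|] //.
have [l [-> _ _ hline]] := ec_add_line h1 h2 h.
have := hline x3; rewrite !subrr mulr0 => /eqP; rewrite subr_eq0 on_curveE => /eqP ->.
by apply/eqP; ring.
Qed.

Lemma ec_mul_on_curve n P : on_curve E P -> on_curve E (ec_mul E n P).
Proof. by move=> hP; elim: n => [|n IH] //=; apply: ec_add_on_curve. Qed.

(* The chord through the three points meets the cubic at x1, x2, x3, so evaluating
   the factorisation of [wcubic z - line(z)^2] at a root e exhibits the square. *)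
Lemma ec_add_root_sq x1 y1 x2 y2 x3 y3 e :
  on_curve E (Some (x1, y1)) -> on_curve E (Some (x2, y2)) ->
  ec_add E (Some (x1, y1)) (Some (x2, y2)) = Some (x3, y3) -> wcubic e = 0 ->
  exists t, (x1 - e) * (x2 - e) * (x3 - e) = t ^+ 2.
Proof.
move=> h1 h2 h ce; have [l [_ _ _ hline]] := ec_add_line h1 h2 h.
exists (l * (e - x1) + y1); apply: oppr_inj; rewrite -[RHS]sub0r -ce hline; ring.
Qed.

Lemma tangent_line_slope x1 y1 x2 l :
  y1 ^+ 2 = wcubic x1 -> x1 = l ^+ 2 - wa E - x1 - x2 ->
  (forall z, wcubic z - (l * (z - x1) + y1) ^+ 2 = (z - x1) * (z - x2) * (z - x1)) ->
  2%:R * l * y1 = wcubic' x1.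
Proof.
move=> h1 hx /(_ (x1 + 1)) hline; apply/eqP; rewrite eq_sym -subr_eq0; apply/eqP.
have -> : wcubic' x1 - 2%:R * l * y1 =
  (wcubic (x1 + 1) - (l * (x1 + 1 - x1) + y1) ^+ 2
     - (x1 + 1 - x1) * (x1 + 1 - x2) * (x1 + 1 - x1))
  - (wcubic x1 - y1 ^+ 2) + (l ^+ 2 - wa E - x1 - x2 - x1) by rewrite /wcubic /wcubic'; ring.
by rewrite hline h1 -hx !subrr.
Qed.

Lemma ec_add_neg_add P Q : nonsingular -> on_curve E P -> on_curve E Q ->
  ec_add E P (ec_neg (ec_add E P Q)) = ec_neg Q.
Proof.
move=> ns; case: P => [[x1 y1]|] //; case: Q => [[x2 y2]|]; last first.
  by move=> _ _ /=; rewrite eqxx opprK eqxx.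
move=> h1 h2.
case h: (ec_add E (Some (x1, y1)) (Some (x2, y2))) => [[x3 y3]|]; last first.
  by move: h => /=; case: ifP => // /andP[/eqP-> /eqP->].
have [l [e3 e2 ex3 hline]] := ec_add_line h1 h2 h.
have {}h1 : y1 ^+ 2 = wcubic x1 by apply/eqP.
rewrite /= opprK.
case: (eqVneq x1 x3) => [ex|nx]; last first.
  have -> : (- y3 - y1) / (x3 - x1) = l by rewrite e3; field; rewrite subr_eq0 eq_sym.
  have -> : l ^+ 2 - wa E - x1 - x3 = x2 by rewrite ex3; ring.
  by rewrite e2; congr (Some (_, _)); ring.
rewrite -ex in e3 ex3 hline *.
have ts := tangent_line_slope h1 ex3 hline.
rewrite e3 subrr mulr0 sub0r /=.
have y0 : y1 != 0.
  apply/eqP => y0; move: (ns x1).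
  by rewrite -h1 -ts y0 mulr0 eqxx expr0n => /(_ erefl).
rewrite eq_oppr_self (negbTE y0) /=.
have -> : wcubic' x1 / (2%:R * y1) = l by rewrite -ts; field.
have -> : l ^+ 2 - wa E - x1 - x1 = x2 by apply: (addIr (- x1)); rewrite {2}ex3; ring.
by rewrite e2; congr (Some (_, _)); ring.
Qed.

End WeierstrassCurve.

Section Multiples.

Variable E : wcurve.

Lemma ec_mul1 P : ec_mul E 1 P = P.
Proof. by case: P => [[]|]. Qed.

Lemma ec_mul_eq_addn P i j m :
  ec_mul E i P = ec_mul E j P -> ec_mul E (i + m) P = ec_mul E (j + m) P.
Proof. by move=> h; elim: m => [|m IH]; rewrite ?addn0 // !addnS /= IH. Qed.

Lemma ec_mul_subn P n j : nonsingular E -> on_curve E P -> ec_mul E n P = None ->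
  (j <= n)%N -> ec_mul E (n - j) P = ec_neg (ec_mul E j P).
Proof.
move=> ns hP hn; elim: j => [_|j IH hj]; first by rewrite subn0 hn.
have := IH (ltnW hj); rewrite -subnSK //= => IH'.
have := ec_add_neg_add ns hP (ec_mul_on_curve (n - j.+1) hP).
by rewrite IH' ec_negK /= => ->; rewrite ec_negK.
Qed.

Lemma ec_mul_x_sub_root_sq P e j : on_curve E P -> wcubic E e = 0 ->
  (forall i, (0 < i <= j.+1)%N -> ec_mul E i P != None) ->
  (forall i, (0 < i < j.+1)%N -> ec_x (ec_mul E i P) != e) ->
  exists t, (ec_x (ec_mul E j.+1 P) - e) * (ec_x P - e) ^+ j.+1 = t ^+ 2.
Proof.
move=> hP ce; elim: j => [|j IH] hsome hx.
  by rewrite ec_mul1; exists (ec_x P - e); rewrite expr1 -expr2.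
have [t ht] := IH (fun i hi => hsome i ltac:(lia)) (fun i hi => hx i ltac:(lia)).
have hxj := hx j.+1 ltac:(lia).
have := hsome 1%N isT; have := hsome j.+1 ltac:(lia); have := hsome j.+2 ltac:(lia).
have hPj := ec_mul_on_curve j.+1 hP.
have ek : ec_mul E j.+2 P = ec_add E P (ec_mul E j.+1 P) by [].
move: ht hxj hPj ek; rewrite ec_mul1.
case: (ec_mul E j.+2 P) => [[xk yk]|] //; case: (ec_mul E j.+1 P) => [[xj yj]|] //.
case: P hP {IH hsome hx} => [[x1 y1]|] // hP /= ht hxj hPj ek _ _ _.
have [u hu] := ec_add_root_sq hP hPj (esym ek) ce.
exists (u * t / (xj - e)); rewrite expr_div_n exprMn -hu -ht exprS.
by field; rewrite subr_eq0.
Qed.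

End Multiples.

(** * Descent for points of finite order *)

Section PointOfFiniteOrder.

Variables (E : wcurve) (n : nat) (P : ecpt).
Hypotheses (ns : nonsingular E) (hP : has_order E n P).

Let P_on : on_curve E P. Proof. by case: hP. Qed.

Let nP : ec_mul E n P = None. Proof. by case: hP => _ [_ []]. Qed.

Let mP_neq0 m : (0 < m < n)%N -> ec_mul E m P <> None.
Proof. by case: hP => _ [_ [_ hm]] /andP[]; apply: hm. Qed.

Lemma ec_mul_neq_lt i j : (0 < i)%N -> (i < j < n)%N -> ec_mul E i P <> ec_mul E j P.
Proof.
move=> i0 /andP[ij jn] h; have := ec_mul_eq_addn (n - j) h.
by rewrite subnKC ?(ltnW jn) // nP; apply: mP_neq0; lia.
Qed.

Lemma ec_mul_neq_neg j : (0 < j < n)%N -> (j.*2 != n)%N ->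
  ec_mul E j P <> ec_neg (ec_mul E j P).
Proof.
move=> /andP[j0 jn] jj h.
have := ec_mul_subn ns P_on nP (ltnW jn); rewrite -h => h2.
case: (ltngtP j (n - j)) => c.
- by apply: (ec_mul_neq_lt j0 _ (esym h2)); lia.
- by apply: (ec_mul_neq_lt _ _ h2); lia.
- by move: jj; rewrite -addnn {2}c subnKC ?(ltnW jn) ?eqxx.
Qed.

Lemma order_point_y_neq0 : (2 < n)%N -> exists x y, P = Some (x, y) /\ y != 0.
Proof.
move=> n2; have := ec_mul_neq_neg (j := 1) ltac:(lia) ltac:(lia).
have := mP_neq0 (m := 1) ltac:(lia); rewrite !ec_mul1.
case: P => [[x y]|] // _ hy; exists x, y; split => //.
by apply: contra_not_neq hy => ->; rewrite /= oppr0.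
Qed.

Lemma ec_mul_x_neq_root i e : (0 < i < n)%N -> (i.*2 != n)%N -> wcubic E e = 0 ->
  ec_x (ec_mul E i P) != e.
Proof.
move=> hi ii ce; have := ec_mul_neq_neg hi ii; have := mP_neq0 hi.
have := ec_mul_on_curve i P_on.
case: (ec_mul E i P) => [[xi yi]|] // hPi _ /=; apply: contra_not_neq => xe.
move: hPi; rewrite on_curveE xe ce sqrf_eq0 => /eqP->; by rewrite oppr0.
Qed.

Lemma order_x_sub_root_sq e j : (j.+1 < n)%N -> (j.*2 < n)%N -> wcubic E e = 0 ->
  exists t, (ec_x (ec_mul E j.+1 P) - e) * (ec_x P - e) ^+ j.+1 = t ^+ 2.
Proof.
move=> hj hjj ce; apply: ec_mul_x_sub_root_sq => // i hi.
  by apply/eqP; apply: mP_neq0; lia.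
by apply: ec_mul_x_neq_root => //; lia.
Qed.

Lemma order_double_sq_at_roots : (2 < n)%N -> sq_at_roots E (ec_x (ec_mul E 2 P)).
Proof.
move=> n2 e ce; have [t ht] := order_x_sub_root_sq (j := 1) n2 n2 ce.
have := ec_mul_x_neq_root (i := 1) ltac:(lia) ltac:(lia) ce; rewrite ec_mul1 => xe.
by exists (t / (ec_x P - e)); rewrite expr_div_n -ht; field; rewrite subr_eq0.
Qed.

Lemma half_order_point m : n = m.*2 -> exists x, ec_mul E m P = Some (x, 0).
Proof.
move=> nm; apply: ec_neg_self; first by apply: mP_neq0; case: hP; lia.
have := @ec_mul_subn _ _ _ m ns P_on nP; rewrite nm -addnn addnK; apply; lia.
Qed.

Lemma half_order_sq_at_roots m : n = m.*2 -> ~~ odd m ->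
  exists x, wcubic E x = 0 /\ sq_at_roots E x.
Proof.
move=> nm ev; have [x hx] := half_order_point nm.
have m2 : (1 < m)%N by case: hP => _ [n0 _]; move: n0 ev; rewrite nm; case: m {hx nm} => [|[|]].
exists x; split.
  by have := ec_mul_on_curve m P_on; rewrite hx on_curveE expr0n eq_sym => /eqP.
move=> e ce; have [t ht] := order_x_sub_root_sq (j := m.-1) ltac:(lia) ltac:(lia) ce.
have := ec_mul_x_neq_root (i := 1) ltac:(lia) ltac:(lia) ce; rewrite ec_mul1 => xe.
rewrite prednK ?(ltnW m2) // hx -[in X in _ ^+ X](even_halfK ev) -addnn exprD in ht.
exists (t / (ec_x P - e) ^+ m./2); rewrite expr_div_n -ht /=.
by field; rewrite expf_neq0 // subr_eq0.
Qed.

End PointOfFiniteOrder.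

Section Psi3.

Variable E : wcurve.

Lemma ec_double_x x y : y != 0 ->
  ec_x (ec_mul E 2 (Some (x, y))) = (wcubic' E x / (2%:R * y)) ^+ 2 - wa E - x - x.
Proof. by move=> y0; rewrite /= eqxx eq_oppr_self (negbTE y0). Qed.

Lemma psi3_eq0_of_double_x x y : y != 0 -> y ^+ 2 = wcubic E x ->
  (wcubic' E x / (2%:R * y)) ^+ 2 - wa E - x - x = x -> psi3 E x = 0.
Proof.
set l := _ / _ => y0 h1 hx.
have hl : l ^+ 2 = 3%:R * x + wa E.
  by apply: (addIr (- wa E - x - x)); rewrite !addrA hx; ring.
have hd : wcubic' E x = 2%:R * l * y by rewrite /l; field.
have -> : psi3 E x = 4%:R * wcubic E x * (3%:R * x + wa E) - wcubic' E x ^+ 2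
  by rewrite /psi3 /wcubic /wcubic'; ring.
by rewrite -h1 hd -hl; ring.
Qed.

(* X is the x-coordinate both of [2]P and of P + (e, 0). With u = x - e and
   D = wcubic' e the latter reads X = e + D / u, the former says that u is a root of
   the quartic [rel_u], and psi3 (e + D / u) is a multiple of [rel_u]. *)
Lemma psi3_eq0_of_double_translate x y e X : wcubic E e = 0 -> x != e -> y != 0 ->
  y ^+ 2 = wcubic E x ->
  X = (wcubic' E x / (2%:R * y)) ^+ 2 - wa E - x - x ->
  X = (y / (x - e)) ^+ 2 - wa E - x - e -> psi3 E X = 0.
Proof.
move=> ce xe y0 h1 Xdbl Xtr.
have u0 : x - e != 0 by rewrite subr_eq0.
have hC : wc E = - (e ^+ 3 + wa E * e ^+ 2 + wb E * e).
  by apply/eqP; rewrite -subr_eq0 -ce /wcubic; apply/eqP; ring.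
pose D := wcubic' E e.
have hX : X = e + D / (x - e) by rewrite Xtr expr_div_n h1 /D /wcubic /wcubic' hC; field.
pose rel_u := ((x - e) ^+ 2 - D) ^+ 2
  - 4%:R * D * ((x - e) ^+ 2 + (3%:R * e + wa E) * (x - e) + D).
have hrel : rel_u = 0.
  have -> : rel_u = 4%:R * y ^+ 2 * (X - (e + D / (x - e)))
      + 4%:R * (y ^+ 2 - wcubic E x) * (wa E + x + x + e + D / (x - e)).
    by rewrite Xdbl /rel_u /D /wcubic /wcubic' hC; field; rewrite u0 y0.
  by rewrite -hX h1 !subrr mulr0 mul0r addr0.
have -> : psi3 E X = - D ^+ 2 * rel_u / (x - e) ^+ 4.
  by rewrite hX /psi3 /rel_u /D /wcubic' hC; field.
by rewrite hrel mulr0 mul0r.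
Qed.

End Psi3.

Section SmallOrder.

Variables (E : wcurve) (P : ecpt).
Hypothesis ns : nonsingular E.

Lemma order3_psi3_sq_at_roots : has_order E 3 P ->
  psi3 E (ec_x P) = 0 /\ sq_at_roots E (ec_x P).
Proof.
move=> hP; have [x [y [eP y0]]] := order_point_y_neq0 ns hP isT.
have [hon [_ [h3 _]]] := hP.
have hx2 : ec_x (ec_mul E 2 P) = ec_x P.
  by rewrite (ec_mul_subn ns hon h3 (isT : (1 <= 3)%N)) ec_x_neg ec_mul1.
split; first last.
  by rewrite -hx2; apply: (order_double_sq_at_roots ns hP).
rewrite eP; apply: (psi3_eq0_of_double_x y0); first by apply/eqP; rewrite -on_curveE -eP.
by rewrite -ec_double_x // -eP.
Qed.

(* [3]P = (e, 0) has order 2, so -[2]P = P + (e, 0). *)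
Lemma order6_psi3_sq_at_roots : has_order E 6 P ->
  psi3 E (ec_x (ec_mul E 2 P)) = 0 /\ sq_at_roots E (ec_x (ec_mul E 2 P)).
Proof.
move=> hP; have [x [y [eP y0]]] := order_point_y_neq0 ns hP isT.
have [hon _] := hP.
have [e he] := half_order_point ns hP (m := 3) erefl.
have ce : wcubic E e = 0.
  by have := ec_mul_on_curve 3 hon; rewrite he on_curveE expr0n eq_sym => /eqP.
have xe : x != e.
  by have := ec_mul_x_neq_root ns hP (i := 1) isT isT ce; rewrite ec_mul1 eP.
have htr := ec_add_neg_add ns hon (ec_mul_on_curve 2 hon).
rewrite -[ec_add E P (ec_mul E 2 P)]/(ec_mul E 3 P) he eP /= (negbTE xe) in htr.
split; last exact: (order_double_sq_at_roots ns hP).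
rewrite eP; apply: (psi3_eq0_of_double_translate ce xe y0).
- by apply/eqP; rewrite -on_curveE -eP.
- by rewrite ec_double_x.
- rewrite -ec_x_neg -htr /=.
  by field; rewrite subr_eq0 xe subr_eq0 eq_sym xe.
Qed.

End SmallOrder.

Definition split_curve (a b : rat) := WCurve (b - a) (- a * b) 0.

Section SplitCurve.

Variables a b : rat.
Hypotheses (a_gt0 : 0 < a) (b_gt0 : 0 < b).

Local Notation E := (split_curve a b).

Lemma split_wcubic x : wcubic E x = x * (x - a) * (x + b).
Proof. by rewrite /wcubic /=; ring. Qed.

Lemma split_roots x : wcubic E x = 0 -> [\/ x = 0, x = a | x = - b].
Proof.
rewrite split_wcubic => /eqP; rewrite !mulf_eq0 subr_eq0 addr_eq0 -orbA.
by case/or3P => /eqP; [constructor 1 | constructor 2 | constructor 3].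
Qed.

Lemma split_nonsingular : nonsingular E.
Proof.
have [a0 b0 ab0] : [/\ a != 0, b != 0 & a + b != 0] by rewrite !gt_eqF ?addr_gt0.
move=> x /split_roots[] ->; rewrite /wcubic' /=.
- have -> : 3%:R * 0 ^+ 2 + 2%:R * (b - a) * 0 + - a * b = - (a * b) by ring.
  by rewrite oppr_eq0 mulf_neq0.
- have -> : 3%:R * a ^+ 2 + 2%:R * (b - a) * a + - a * b = a * (a + b) by ring.
  by rewrite mulf_neq0.
- have -> : 3%:R * (- b) ^+ 2 + 2%:R * (b - a) * (- b) + - a * b = b * (a + b) by ring.
  by rewrite mulf_neq0.
Qed.

Lemma split_sq_at_roots x : sq_at_roots E x ->
  [/\ exists t, x = t ^+ 2, exists t, x - a = t ^+ 2 & exists t, x + b = t ^+ 2].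
Proof.
move=> hx; have [t1 h1] := hx 0 ltac:(by rewrite split_wcubic !mul0r).
have [t2 h2] := hx a ltac:(by rewrite split_wcubic subrr mulr0 mul0r).
have [t3 h3] := hx (- b) ltac:(by rewrite split_wcubic addNr mulr0).
by split; [exists t1; rewrite -h1 subr0 | exists t2 | exists t3; rewrite -h3 opprK].
Qed.

Lemma split_root_sq_at_roots x : wcubic E x = 0 -> sq_at_roots E x ->
  (exists t, a = t ^+ 2) /\ (exists t, a + b = t ^+ 2).
Proof.
have neg_sq (q t : rat) : q < 0 -> q <> t ^+ 2.
  by move=> q0 qt; move: (sqr_ge0 t); rewrite -qt leNgt q0.
move=> /split_roots[] -> /split_sq_at_roots [[t1 h1] [t2 h2] [t3 h3]].
- by exfalso; apply: (neg_sq _ t2 _ h2); rewrite sub0r oppr_lt0.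
- by split; [exists t1 | exists t3].
- by exfalso; apply: (neg_sq _ t1 _ h1); rewrite oppr_lt0.
Qed.

Lemma split_order4_8 : has_point_of_order E 4 \/ has_point_of_order E 8 ->
  (exists t, a = t ^+ 2) /\ (exists t, a + b = t ^+ 2).
Proof.
move=> h; have [m [P [hP ev]]] : exists m P, has_order E m.*2 P /\ ~~ odd m.
  by case: h => -[P hP]; [exists 2%N | exists 4%N]; exists P.
have [x [hx hsq]] := half_order_sq_at_roots split_nonsingular hP erefl ev.
exact: split_root_sq_at_roots hx hsq.
Qed.

Lemma split_order3_6 : has_point_of_order E 3 \/ has_point_of_order E 6 ->
  exists X, psi3 E X = 0 /\
    [/\ exists t, X = t ^+ 2, exists t, X - a = t ^+ 2 & exists t, X + b = t ^+ 2].
Proof.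
move=> h; suff [X [h1 h2]] : exists X, psi3 E X = 0 /\ sq_at_roots E X.
  by exists X; split; last exact: split_sq_at_roots.
case: h => -[P hP]; eexists.
- exact: order3_psi3_sq_at_roots split_nonsingular hP.
- exact: order6_psi3_sq_at_roots split_nonsingular hP.
Qed.

End SplitCurve.

Lemma prime_dvd_of_mul_sq_eq (p k w N D d : nat) : prime p -> (p %| k)%N ->
  ~~ (p * p %| k)%N -> coprime N D -> ~~ (p %| d)%N ->
  (k * w * D ^ 2 = N ^ 2 * d)%N -> (p %| w)%N.
Proof.
move=> pp pk ppk cND pd h.
have pN : (p %| N)%N.
  have : (p %| N ^ 2 * d)%N by rewrite -h !dvdn_mulr.
  by rewrite Euclid_dvdM // (negbTE pd) orbF Euclid_dvdX // andbT.
have pD : ~~ (p %| D)%N.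
  apply: contraL cND => pD; rewrite /coprime; apply: contraL (prime_gt1 pp) => /eqP g1.
  by rewrite -leqNgt dvdn_leq // -g1 dvdn_gcd pN.
have ek : k = (p * (k %/ p))%N by rewrite mulnC divnK.
have pk' : ~~ (p %| k %/ p)%N by apply: contra ppk => h'; rewrite ek dvdn_pmul2l ?prime_gt0.
have : (p * p %| N ^ 2 * d)%N by rewrite dvdn_mulr // expnS expn1 dvdn_mul.
rewrite -h ek -!mulnA dvdn_pmul2l ?prime_gt0 //.
by rewrite Euclid_dvdM // (negbTE pk') /= Euclid_dvdM // Euclid_dvdX // (negbTE pD) orbF.
Qed.

(* The p-adic valuation 1 + v_p(w) of the square k * w / d must be even. *)
Lemma rat_sq_prime_dvd (p k : nat) (w d : int) (t : rat) : prime p -> (p %| k)%N ->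
  ~~ (p * p %| k)%N -> d != 0 -> ~~ (p %| `|d|)%N ->
  k%:R * (w%:~R / d%:~R) = t ^+ 2 -> (p %| `|w|)%N.
Proof.
move=> pp pk ppk d0 pd h.
apply: (prime_dvd_of_mul_sq_eq pp pk ppk (coprime_num_den t) pd).
have D0 := denq_neq0 t.
have H : (k%:Z * w * denq t ^+ 2 = numq t ^+ 2 * d)%R.
  apply: (intr_inj (R := rat)); rewrite !(intrM, rmorphXn) /= -[k%:~R]pmulrn.
  have -> : k%:R * w%:~R * (denq t)%:~R ^+ 2 =
     k%:R * (w%:~R / d%:~R) * d%:~R * (denq t)%:~R ^+ 2 :> rat by field; rewrite intr_eq0.
  by rewrite h -{1}(divq_num_den t); field; rewrite intr_eq0.
by have := congr1 absz H; rewrite !abszM absz_nat.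
Qed.

Lemma prime_dvd_sub_add (r : int) (s p : nat) : coprime `|r| s -> prime p ->
  (p%:Z %| s%:Z - r)%Z -> (p%:Z %| s%:Z + r)%Z -> (p %| 2)%N.
Proof.
move=> cop pp h1 h2; have [//|p2] := boolP (p %| 2)%N.
have hs : (p%:Z %| 2 * s%:Z)%Z.
  have -> : (2 * s%:Z = s%:Z - r + (s%:Z + r))%R by ring.
  exact: rpredD.
have hr : (p%:Z %| 2 * r)%Z.
  have -> : (2 * r = s%:Z + r - (s%:Z - r))%R by ring.
  exact: rpredB.
rewrite !dvdzE !abszM !Euclid_dvdM //= (negbTE p2) /= in hs hr.
have : (p %| gcdn `|r| s)%N by rewrite dvdn_gcd hs hr.
by rewrite (eqP cop) dvdn1 => /eqP p1; rewrite p1 in pp.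
Qed.

Lemma denq_dvd3_of_root (c3 c2 c0 : int) (u : rat) :
  3%:R * u ^+ 4 + c3%:~R * u ^+ 3 + c2%:~R * u ^+ 2 + c0%:~R = 0 -> (`|denq u| %| 3)%N.
Proof.
move=> hu; set n := numq u; set d := denq u.
have d0 : d != 0 := denq_neq0 u.
have G : (3 * n ^+ 4 + (c3 * n ^+ 3 + c2 * n ^+ 2 * d + c0 * d ^+ 3) * d = 0)%R.
  apply: (intr_inj (R := rat)); rewrite rmorph0 -(mul0r (d%:~R ^+ 4)) -hu.
  rewrite -[u]divq_num_den -/n -/d !(intrM, intrD, rmorphXn) /=.
  by field; rewrite intr_eq0.
have G' : (3 * n ^+ 4 = - (c3 * n ^+ 3 + c2 * n ^+ 2 * d + c0 * d ^+ 3) * d)%R.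
  by rewrite mulNr; apply/eqP; rewrite -addr_eq0 G.
have : (d %| 3 * n ^+ 4)%Z by rewrite G' dvdz_mull.
rewrite dvdzE abszM abszX Gauss_dvdl //.
by apply: coprimeXr; rewrite coprime_sym coprime_num_den.
Qed.

Lemma squarefree_dvd (k n : nat) : squarefree k -> (0 < n)%N ->
  (forall p, prime p -> (p %| k)%N -> (p %| n)%N) -> (k %| n)%N.
Proof.
move=> [k0 sq] n0 hp.
have : k = (k %/ gcdn k n * gcdn k n)%N by rewrite divnK ?dvdn_gcdl.
set q := (k %/ _)%N; set g := gcdn k n => ek.
case: (ltngtP q 1) => hq.
- by move: k0; rewrite ek; move: hq; rewrite ltnS leqn0 => /eqP->.
- have pq := pdiv_prime hq.
  have pk : (pdiv q %| k)%N by rewrite ek dvdn_mulr ?pdiv_dvd.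
  have pg : (pdiv q %| g)%N by rewrite dvdn_gcd pk hp.
  by have := sq _ pq; rewrite ek dvdn_mul ?pdiv_dvd.
- by rewrite ek hq mul1n dvdn_gcdr.
Qed.

(** * The theta-congruent curve *)

Section ThetaCurve.

Variables (r : int) (s k : nat).
Hypotheses (cop : coprime `|r| s) (rs : (`|r| < s)%N) (sqk : squarefree k).

Local Notation a := (((s%:R : rat) - r%:~R) * k%:R).
Local Notation b := (((s%:R : rat) + r%:~R) * k%:R).

Lemma theta_curveE : theta_curve r s k = split_curve a b.
Proof. by []. Qed.

Let k_gt0 : (0 < k)%N. Proof. by case: sqk. Qed.

Lemma theta_params_gt0 : 0 < a /\ 0 < b.
Proof.
have : `|(r%:~R : rat)| < s%:R by rewrite -intr_norm -natr_absz ltr_nat.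
by rewrite ltr_norml => /andP[h1 h2]; split; apply: mulr_gt0; rewrite ?ltr0n //; lra.
Qed.

Lemma theta_order4_8_dvd2 :
  has_point_of_order (theta_curve r s k) 4 \/ has_point_of_order (theta_curve r s k) 8 ->
  (k %| 2)%N.
Proof.
have [a_gt0 b_gt0] := theta_params_gt0.
rewrite theta_curveE => /(split_order4_8 a_gt0 b_gt0) [[t1 h1] [t2 h2]].
apply: squarefree_dvd => // p pp pk; have ppk := sqk.2 p pp.
have nd1 : ~~ (p %| `|1%:Z|)%N by rewrite dvdn1; apply: contraL (prime_gt1 pp) => /eqP->.
have q1 : (p %| `|s%:Z - r|)%N.
  apply: (rat_sq_prime_dvd (d := 1) (t := t1) pp pk ppk _ nd1) => //.
  by rewrite -h1 rmorphB /= -pmulrn divr1 mulrC.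
have q2 : (p %| `|(2 * s%:Z)%R|)%N.
  apply: (rat_sq_prime_dvd (d := 1) (t := t2) pp pk ppk _ nd1) => //.
  by rewrite -h2 rmorphM /= -!pmulrn divr1; ring.
apply: (prime_dvd_sub_add cop pp); first by rewrite dvdzE.
have -> : (s%:Z + r = 2 * s%:Z - (s%:Z - r))%R by ring.
by apply: rpredB; rewrite dvdzE.
Qed.

Lemma theta_psi3_scaled (u : rat) : let m : int := (s%:Z ^+ 2 - r ^+ 2)%R in
  psi3 (theta_curve r s k) (k%:R * u) = k%:R ^+ 4 *
    (3%:R * u ^+ 4 + (8 * r)%:~R * u ^+ 3 + (- 6 * m)%:~R * u ^+ 2 + (- m ^+ 2)%:~R).
Proof.
by rewrite /psi3 /= !(intrM, intrD, intrN, intrB, rmorphXn) /= -[s%:~R]pmulrn; ring.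
Qed.

Lemma theta_order3_6_dvd6 :
  has_point_of_order (theta_curve r s k) 3 \/ has_point_of_order (theta_curve r s k) 6 ->
  (k %| 6)%N.
Proof.
have [a_gt0 b_gt0] := theta_params_gt0.
move=> /(split_order3_6 a_gt0 b_gt0) [X [hpsi [[t1 h1] [t2 h2] [t3 h3]]]].
apply: squarefree_dvd => // p pp pk; have ppk := sqk.2 p pp.
have [//|p6] := boolP (p %| 6)%N; exfalso.
have K0 : (k%:R : rat) != 0 by rewrite pnatr_eq0 -lt0n.
pose u := X / k%:R; have hX : X = k%:R * u by rewrite /u; field.
move: hpsi; rewrite -theta_curveE hX theta_psi3_scaled => /eqP.
rewrite mulf_eq0 expf_eq0 (negbTE K0) andbF /= => /eqP /denq_dvd3_of_root d3.
have pd : ~~ (p %| `|denq u|)%N.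
  by apply: contra p6 => /dvdn_trans/(_ d3) p3; apply: dvdn_trans p3 _.
have hu : X = k%:R * ((numq u)%:~R / (denq u)%:~R) by rewrite divq_num_den.
move: (numq u) (denq u) (denq_neq0 u) hu pd => n d d0 hu pd.
have q1 : (p%:Z %| n)%Z.
  by rewrite dvdzE; apply: (rat_sq_prime_dvd (t := t1) pp pk ppk d0 pd); rewrite -h1 hu.
have q2 : (p%:Z %| n - (s%:Z - r) * d)%Z.
  rewrite dvdzE; apply: (rat_sq_prime_dvd (t := t2) pp pk ppk d0 pd).
  by rewrite -h2 hu !(intrB, intrM) -pmulrn; field; rewrite intr_eq0.
have q3 : (p%:Z %| n + (s%:Z + r) * d)%Z.
  rewrite dvdzE; apply: (rat_sq_prime_dvd (t := t3) pp pk ppk d0 pd).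
  by rewrite -h3 hu !(intrD, intrM) -pmulrn; field; rewrite intr_eq0.
have cancel_d (c : int) : (p%:Z %| c * d)%Z -> (p%:Z %| c)%Z.
  by rewrite !dvdzE abszM Euclid_dvdM // (negbTE pd) orbF.
case/negP: p6; apply: dvdn_trans (prime_dvd_sub_add cop pp _ _) _ => //; apply: cancel_d.
- have -> : ((s%:Z - r) * d = n - (n - (s%:Z - r) * d))%R by ring.
  exact: rpredB.
- have -> : ((s%:Z + r) * d = n + (s%:Z + r) * d - n)%R by ring.
  exact: rpredB.
Qed.

End ThetaCurve.

Local Close Scope ring_scope.
Unset Implicit Arguments.
Set Strict Implicit.

Theorem theorem4p2 (r : int) (s k : nat) :
  coprime `|r|%N s -> (`|r| < s)%N -> squarefree k ->
  let E := theta_curve r s k in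
  (odd k -> (has_point_of_order E 4 \/ has_point_of_order E 8) -> k = 1%N) /\
  (~~ odd k -> (has_point_of_order E 4 \/ has_point_of_order E 8) -> k = 2%N) /\
  (odd k -> (has_point_of_order E 3 \/ has_point_of_order E 6) ->
     k = 1%N \/ k = 3%N) /\
  (~~ odd k -> (has_point_of_order E 3 \/ has_point_of_order E 6) ->
     k = 2%N \/ k = 6%N).
Proof.
move=> cop rs sqk E.
have k2 : (has_point_of_order E 4 \/ has_point_of_order E 8) -> k \in [:: 1; 2]%N.
  by move/(theta_order4_8_dvd2 cop rs sqk); rewrite dvdn_divisors.
have k6 : (has_point_of_order E 3 \/ has_point_of_order E 6) -> k \in [:: 1; 2; 3; 6]%N.
  by move/(theta_order3_6_dvd6 cop rs sqk); rewrite dvdn_divisors.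
split; [|split; [|split]] => pk.
- by move/k2; rewrite !inE => /orP[] /eqP kE; move: pk; rewrite kE.
- by move/k2; rewrite !inE => /orP[] /eqP kE; move: pk; rewrite kE.
- by move/k6; rewrite !inE => /or4P[] /eqP kE; move: pk; rewrite kE; auto.
- by move/k6; rewrite !inE => /or4P[] /eqP kE; move: pk; rewrite kE; auto.
Qed.
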